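(* Let $K_0$ be a finite extension of $\mathbb{Q}_2$ with odd absolute ramification index $e_0$, and let $K_2/K_0$ be a totally ramified cyclic extension of degree $4$ with Galois group generated by $\sigma$, with intermediate field $K_1$ (the fixed field of $\sigma^2$), whose lower ramification break numbers are $b_1=e_0$ and $b_2=b_1+2e_0$. Then for every odd integer $a$ there are $\alpha,\rho\in K_2$ with $v_2(\alpha)=a$ and $v_2(\rho)=a+(b_2-b_1)$ such that: if $a\equiv e_0\pmod 4$, then $\mu_1:=(\sigma-1)\alpha-\rho\in K_1$ with $v_2(\mu_1)=a+b_1$; if $a\equiv 3e_0\pmod 4$, then $\mu_0:=(\sigma+1)\alpha-\rho\in K_0$ with $v_2(\mu_0)=a+b_1$.
   Context: $v_2$ is the normalized valuation of $K_2$. The lower ramification break numbers of $\mathrm{Gal}(K_2/K_0)$ are the integers $j\ge1$ with $G_j\ne G_{j+1}$ in the lower-numbering ramification filtration. $(\sigma\pm1)\alpha=\sigma(\alpha)\pm\alpha$. *)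

From mathcomp Require Import all_boot all_order all_algebra.
Set Implicit Arguments. Unset Strict Implicit. Unset Printing Implicit Defensive.
Import Order.TTheory GRing.Theory Num.Theory.
Local Open Scope ring_scope.

Section LocalField.
Variable K : fieldType.
(* v : K -> int is a valuation; its value at 0 is irrelevant (v(0) = +oo
   is encoded by always treating x = 0 separately). *)
Variable v : K -> int.

Definition is_normalized_dvaluation : Prop :=
  [/\ forall x y : K, x != 0 -> y != 0 -> v (x * y) = v x + v y,
      forall x y : K, x != 0 -> y != 0 -> x + y != 0 ->
                      Num.min (v x) (v y) <= v (x + y)
    & exists pi : K, pi != 0 /\ v pi = 1].

(* "v(x) >= n" with the convention v(0) = +oo *)
Definition vge (x : K) (n : int) : Prop := x = 0 \/ v x >= n.

Definition v_complete : Prop :=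
  forall u : nat -> K,
    (forall N : int, exists n0 : nat, forall m n : nat,
        (n0 <= m)%N -> (n0 <= n)%N -> vge (u m - u n) N) ->
    exists l : K, forall N : int, exists n0 : nat, forall n : nat,
        (n0 <= n)%N -> vge (u n - l) N.

(* the residue field O_K / m_K is finite *)
Definition finite_residue_field : Prop :=
  exists s : seq K, forall x : K, vge x 0 ->
    exists2 r, r \in s & vge (x - r) 1.

(* K is a finite extension of Q_2 with normalized valuation v: a complete
   discretely valued field of characteristic 0 with finite residue field
   of characteristic 2. *)
Definition finite_ext_Q2 : Prop :=
  [/\ is_normalized_dvaluation, v_complete, finite_residue_field,
      [pchar K] =i pred0 & 0 < v 2].

Definition in_OK (x : K) : Prop := vge x 0.

Definition in_lower_ram_group (i : nat) (g : K -> K) : Prop :=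
  forall x : K, in_OK x -> vge (g x - x) (i.+1)%:Z.

Definition is_lower_break (sigma : K -> K) (j : nat) : Prop :=
  (1 <= j)%N /\
  ~ (forall k : 'I_4, in_lower_ram_group j (iter k sigma) <->
                      in_lower_ram_group j.+1 (iter k sigma)).
End LocalField.

(* The two breaks determine how [sigma] and [tau = sigma^2] move a uniformizer
   [pi]: [v (sigma pi - pi) = e0 + 1] and [v (tau pi - pi) = 3 e0 + 1].  Indeed a
   unit is congruent modulo the maximal ideal to a [sigma]-fixed element (its
   norm has a fixed fourth root in the finite residue field of characteristic 2),
   so whether [sigma^k] lies in the next ramification group is decided on [pi].
   Then [z = (pi - tau pi) / (pi + tau pi)] satisfies [tau z = - z] and
   [v (z - 1) = e0].  As [sigma] multiplies an element of valuation [n] by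
   [1 + n (sigma pi - pi) / pi] up to higher order and [e0] is odd,
   [y = sigma z / z] satisfies [v (y - 1) = v (y + 1) = 2 e0], [sigma y = - 1 / y]
   and [tau y = y].  For [lam] in [K0] of valuation 4 the required elements are
   - for [a = e0 + 4 n]: [alpha = lam^n (z - 1)], [rho = (y - 1) alpha], giving
     [mu1 = lam^n (y - 1)];
   - for [a = 3 e0 + 4 n] and [k = lam^(n + e0)]: [alpha = - k y (z - 1) / (y + 1)],
     [rho = 2 k y (z - 1) / (y^2 - 1)], giving [mu0 = k]. *)

From Pilot Require Import Defs.
From mathcomp Require Import all_boot all_order all_algebra.
From mathcomp Require Import zify ring.
From Stdlib Require Import Classical.
Import Order.TTheory GRing.Theory Num.Theory.
Local Open Scope ring_scope.

Lemma eqz_mod_exists (d a b : int) : (a = b %[mod d])%Z -> exists k : int, a = b + k * d.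
Proof. by move/eqP; rewrite eqz_mod_dvd => /dvdzP [k kP]; exists k; rewrite -kP; ring. Qed.

Lemma odd_mod4_cases {a : int} {e : nat} : ~~ (2 %| a)%Z -> odd e ->
  (a = e%:Z %[mod 4])%Z \/ (a = (3 * e)%:Z %[mod 4])%Z.
Proof. by lia. Qed.

Lemma odd_mod4_exclusive {a : int} {e : nat} : odd e ->
  (a = e%:Z %[mod 4])%Z -> (a = (3 * e)%:Z %[mod 4])%Z -> False.
Proof. by lia. Qed.

Section Valuation.
Variables (K : fieldType) (v : K -> int).
Hypothesis valM : forall x y : K, x != 0 -> y != 0 -> v (x * y) = v x + v y.
Hypothesis val_min : forall x y : K, x != 0 -> y != 0 -> x + y != 0 ->
  Num.min (v x) (v y) <= v (x + y).

Local Notation vge := (vge v).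

Lemma val1 : v 1 = 0.
Proof. by have := valM 1 1 (oner_neq0 K) (oner_neq0 K); rewrite mulr1; lia. Qed.

Lemma valN (x : K) : v (- x) = v x.
Proof.
have [->|x0] := eqVneq x 0; first by rewrite oppr0.
have N1_0 : (-1 : K) != 0 by rewrite oppr_eq0 oner_neq0.
have := valM (-1) (-1) N1_0 N1_0; rewrite mulrNN mulr1 val1 => valN1.
by rewrite -mulN1r valM //; lia.
Qed.

Lemma valV (x : K) : x != 0 -> v x^-1 = - v x.
Proof. by move=> x0; have := valM x x^-1 x0 (invr_neq0 x0); rewrite mulfV // val1; lia. Qed.

Lemma valf_div (x y : K) : x != 0 -> y != 0 -> v (x / y) = v x - v y.
Proof. by move=> x0 y0; rewrite valM ?invr_neq0 // valV. Qed.

Lemma valXn (x : K) n : x != 0 -> v (x ^+ n) = n%:Z * v x.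
Proof.
move=> x0; elim: n => [|n IHn]; first by rewrite expr0 val1 mul0r.
by rewrite exprS valM ?expf_neq0 // IHn intS mulrDl mul1r.
Qed.

Lemma valXz (x : K) (n : int) : x != 0 -> v (x ^ n) = n * v x.
Proof.
move=> x0; case: n => n; first exact: valXn.
by rewrite NegzE -exprnN valV ?expf_neq0 // valXn //; lia.
Qed.

Lemma vge_val (x : K) : vge x (v x).
Proof. by right. Qed.

Lemma vgeW {x : K} {n m} : vge x n -> m <= n -> vge x m.
Proof. by move=> [->|le_nx] le_mn; [left | right; apply: le_trans le_nx]. Qed.

Lemma vgeN {x : K} {n} : vge (- x) n <-> vge x n.
Proof.
rewrite /Defs.vge valN; split=> -[x0|]; try by right.
- by left; apply: oppr_inj; rewrite x0 oppr0.
- by left; rewrite x0 oppr0.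
Qed.

Lemma vgeD {x y : K} {n} : vge x n -> vge y n -> vge (x + y) n.
Proof.
move=> [->|le_nx]; first by rewrite add0r.
move=> [->|le_ny]; first by rewrite addr0; right.
have [->|xy0] := eqVneq (x + y) 0; first by left.
have [x0|x0] := eqVneq x 0; first by right; rewrite x0 add0r.
have [y0|y0] := eqVneq y 0; first by right; rewrite y0 addr0.
by right; apply: le_trans (val_min x y x0 y0 xy0); rewrite le_min le_nx le_ny.
Qed.

Lemma vgeB {x y : K} {n} : vge x n -> vge y n -> vge (x - y) n.
Proof. by move=> vx vy; apply: vgeD => //; apply/vgeN. Qed.

Lemma vgeM {x y : K} {n m} : vge x n -> vge y m -> vge (x * y) (n + m).
Proof.
have [->|x0] := eqVneq x 0; first by rewrite mul0r; left.
have [->|y0] := eqVneq y 0; first by rewrite mulr0; left.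
move=> [/eqP|le_nx]; first by rewrite (negbTE x0).
move=> [/eqP|le_my]; first by rewrite (negbTE y0).
by right; rewrite valM // lerD.
Qed.

Lemma vge_unitMl {a b : K} {n} : a != 0 -> v a = 0 -> vge (a * b) n -> vge b n.
Proof.
move=> a0 va; have [->|b0] := eqVneq b 0; first by left.
by move=> [/eqP|]; [rewrite mulf_eq0 (negbTE a0) (negbTE b0) | rewrite valM // va add0r; right].
Qed.

Lemma valDl (x y : K) : x != 0 -> vge y (v x + 1) -> x + y != 0 /\ v (x + y) = v x.
Proof.
move=> x0; have [->|y0] := eqVneq y 0; first by rewrite addr0.
move=> [/eqP|lt_xy]; first by rewrite (negbTE y0).
have xy0 : x + y != 0.
  by apply: contraTneq lt_xy => /eqP; rewrite addr_eq0 => /eqP ->; rewrite valN; lia.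
have Ny0 : - y != 0 by rewrite oppr_eq0.
split=> //; have := val_min x y x0 y0 xy0.
have := val_min (x + y) (- y) xy0 Ny0; rewrite addrK valN => /(_ x0).
by rewrite !ge_min => /orP[] ? /orP[] ?; lia.
Qed.

Lemma in_OK_unit (x : K) : v x = 0 -> in_OK v x.
Proof. by move=> vx; right; rewrite vx. Qed.

Lemma in_OKM {x y : K} : in_OK v x -> in_OK v y -> in_OK v (x * y).
Proof. by move=> Ox Oy; have := vgeM Ox Oy; rewrite addr0. Qed.

Lemma in_OKX {x : K} n : in_OK v x -> in_OK v (x ^+ n).
Proof.
move=> Ox; elim: n => [|n IHn]; last by rewrite exprS; apply: in_OKM.
by rewrite expr0; apply: in_OK_unit; rewrite val1.
Qed.

Lemma in_OKn n : in_OK v n%:R.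
Proof.
elim: n => [|n IHn]; first by left.
by rewrite -addn1 natrD; apply: vgeD => //; apply: in_OK_unit; rewrite val1.
Qed.

Lemma vge_expn1 {x : K} n : (0 < n)%N -> vge (x ^+ n) 1 -> vge x 1.
Proof.
have [->|x0] := eqVneq x 0; first by left.
move=> n_gt0 [/eqP|]; first by rewrite expf_eq0 n_gt0 (negbTE x0).
by rewrite valXn // => le1; right; case: n n_gt0 le1 => // n _; nia.
Qed.

Lemma vge_cong_mul {a a' b b' : K} : in_OK v a' -> in_OK v b ->
  vge (a - a') 1 -> vge (b - b') 1 -> vge (a * b - a' * b') 1.
Proof.
move=> Oa' Ob aa' bb'.
have -> : a * b - a' * b' = (a - a') * b + a' * (b - b') by ring.
by apply: vgeD; [have := vgeM aa' Ob | have := vgeM Oa' bb']; rewrite ?addr0 ?add0r.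
Qed.

Lemma vge_expn_sub1 {x : K} n : in_OK v x -> vge (x - 1) 1 -> vge (x ^+ n - 1) 1.
Proof.
move=> Ox x1; elim: n => [|n IHn]; first by rewrite expr0 subrr; left.
rewrite exprS -[X in _ - X](mulr1 1); apply: vge_cong_mul => //; last exact: in_OKX.
by apply: in_OK_unit; rewrite val1.
Qed.

Section Automorphism.
Variable sigma : {rmorphism K -> K}.
Hypothesis sigma4 : forall x : K, sigma (sigma (sigma (sigma x))) = x.
Hypothesis val_sigma : forall x : K, x != 0 -> v (sigma x) = v x.

Local Notation G j g := (in_lower_ram_group v j g).

Lemma val_sigmaE (x : K) : v (sigma x) = v x.
Proof. by have [->|/val_sigma] := eqVneq x 0; rewrite ?rmorph0. Qed.

Lemma in_OK_iter_sigma {x : K} k : in_OK v x -> in_OK v (iter k sigma x).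
Proof.
move=> Ox; elim: k => //= k [->|Ok]; first by rewrite rmorph0; left.
by right; rewrite val_sigmaE.
Qed.

Lemma lower_ram_group_le i j (g : K -> K) : (i <= j)%N -> G j g -> G i g.
Proof. by move=> le_ij g_Gj x Ox; apply: vgeW (g_Gj x Ox) _; rewrite lez_nat ltnS. Qed.

Lemma lower_ram_group_iterD {j m n} :
  G j (iter m sigma) -> G j (iter n sigma) -> G j (iter (m + n) sigma).
Proof.
move=> Gm Gn x Ox; rewrite iterD.
have -> : iter m sigma (iter n sigma x) - x =
  (iter m sigma (iter n sigma x) - iter n sigma x) + (iter n sigma x - x) by ring.
by apply: vgeD; [apply/Gm/in_OK_iter_sigma | apply: Gn].
Qed.

Lemma lower_ram_group_iter3 j : G j (iter 3 sigma) <-> G j (iter 1 sigma).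
Proof.
split=> [G3 x Ox | G1]; last exact: (lower_ram_group_iterD (m := 1) (n := 2)
  G1 (lower_ram_group_iterD (m := 1) (n := 1) G1 G1)).
have -> : iter 1 sigma x = iter 9 sigma x by rewrite /= !sigma4.
exact: (lower_ram_group_iterD (m := 3) (n := 6) G3 (lower_ram_group_iterD G3 G3)).
Qed.

Lemma lower_break_cases j : is_lower_break v sigma j ->
  (G j (iter 1 sigma) /\ ~ G j.+1 (iter 1 sigma)) \/
  (G j (iter 2 sigma) /\ ~ G j.+1 (iter 2 sigma)).
Proof.
move=> [_ jump]; apply: NNPP => /not_or_and [no1 no2]; apply: jump => k.
split; last exact: lower_ram_group_le.
have step m : ~ (G j (iter m sigma) /\ ~ G j.+1 (iter m sigma)) ->
    G j (iter m sigma) -> G j.+1 (iter m sigma).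
  by move=> no Gm; apply: NNPP => nGm; apply: no.
case: k => [[|[|[|[|m]]]] lt_k4] //.
- by move=> _ x _; rewrite subrr; left.
- exact: step no1.
- exact: step no2.
- by move/lower_ram_group_iter3/(step _ no1)/lower_ram_group_iter3.
Qed.

Lemma lower_breaks_sigma {e} : (0 < e)%N ->
  is_lower_break v sigma e -> is_lower_break v sigma (3 * e) ->
  [/\ G e (iter 1 sigma), ~ G e.+1 (iter 1 sigma),
      G (3 * e) (iter 2 sigma) & ~ G (3 * e).+1 (iter 2 sigma)].
Proof.
move=> e_gt0 /lower_break_cases brk1 /lower_break_cases brk3.
have le_e : (e.+1 <= 3 * e)%N by lia.
have G12 i : G i (iter 1 sigma) -> G i (iter 2 sigma).
  by move=> G1; apply: (lower_ram_group_iterD (m := 1) (n := 1)).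
case: brk3 => [[G1 _]|[G2 nG2]].
  by case: brk1 => -[_ []]; apply: lower_ram_group_le le_e _; last exact: G12.
case: brk1 => [[G1 nG1]|[_ []]]; first by [].
exact: lower_ram_group_le le_e G2.
Qed.

Section ResidueField.
Hypothesis val2_gt0 : 0 < v 2.

Lemma vge2 : vge 2 1.
Proof. by right; lia. Qed.

Lemma vge_sqr_sub {x y : K} : in_OK v x -> in_OK v y ->
  vge (x ^+ 2 - y ^+ 2) 1 -> vge (x - y) 1.
Proof.
move=> Ox Oy xy2; apply: (vge_expn1 2) => //.
have -> : (x - y) ^+ 2 = (x ^+ 2 - y ^+ 2) - 2 * y * (x - y) by ring.
by apply: vgeB => //; have := vgeM (vgeM vge2 Oy) (vgeB Ox Oy); rewrite !addr0.
Qed.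

Lemma val_odd_nat n : odd n -> n%:R != 0 :> K /\ v n%:R = 0.
Proof.
move=> n_odd; rewrite -[n]odd_double_half n_odd -mul2n natrD natrM.
rewrite -val1; apply: valDl; first exact: oner_neq0.
by rewrite val1 add0r; have := vgeM vge2 (in_OKn n./2); rewrite addr0.
Qed.

Hypothesis finite_res : finite_residue_field v.

Lemma unit_exp_cong1 {c : K} : c != 0 -> v c = 0 ->
  exists2 m, (0 < m)%N & vge (c ^+ m - 1) 1.
Proof.
move=> c0 vc; have [s res_s] := finite_res.
have valcX i : v (c ^+ i) = 0 by rewrite valXn // vc mulr0.
have /fin_all_exists [f res_f] : forall i : 'I_(size s).+1,
    exists j : 'I_(size s), vge (c ^+ i - s`_j) 1.
  move=> i; have [r r_s cr] := res_s _ (in_OK_unit _ (valcX i)).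
  by exists (Ordinal (etrans (index_mem r s) r_s)); rewrite /= nth_index.
have [i [j [lt_ij fij]]] : exists i j : 'I_(size s).+1, (i < j)%N /\ f i = f j.
  have /injectivePn [i [j neq_ij fij]] : ~~ injectiveb f.
    by apply/injectiveP => /leq_card; rewrite !card_ord ltnn.
  case: (ltngtP i j) => [lt|gt|/val_inj eq]; last by rewrite eq eqxx in neq_ij.
    by exists i, j.
  by exists j, i.
exists (j - i)%N; first by rewrite subn_gt0.
rewrite -opprB; apply/vgeN; apply: (@vge_unitMl (c ^+ i)); rewrite ?expf_neq0 //.
have := vgeB (res_f i) (res_f j); rewrite fij.
rewrite -[in c ^+ j](subnKC (ltnW lt_ij)) exprD.
by congr (vge _ _); ring.
Qed.

Lemma unit_odd_exp_cong1 {c : K} : c != 0 -> v c = 0 ->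
  exists2 m, odd m & vge (c ^+ m - 1) 1.
Proof.
move=> c0 vc; have [m m_gt0 cm] := unit_exp_cong1 c0 vc.
elim/ltn_ind: m m_gt0 cm => m IHm m_gt0 cm.
have [m_odd|m_even] := boolP (odd m); first by exists m.
have m_eq : m = (m./2 * 2)%N by rewrite -[LHS]odd_double_half (negbTE m_even) muln2.
apply: (IHm m./2); [lia | lia |].
have O1 : in_OK v 1 by apply: in_OK_unit; rewrite val1.
by apply: (vge_sqr_sub (in_OKX _ (in_OK_unit _ vc)) O1); rewrite expr1n -exprM -m_eq.
Qed.

Lemma unit_fourth_root {c : K} : c != 0 -> v c = 0 ->
  exists n, vge ((c ^+ n) ^+ 4 - c) 1.
Proof.
move=> c0 vc; have [m m_odd cm] := unit_odd_exp_cong1 c0 vc.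
exists (m./2.+1 ^ 2)%N.
have exp_eq : (m./2.+1 ^ 2 * 4 = (m * (m + 2)).+1)%N.
  by rewrite -[in RHS](odd_double_half m) m_odd; lia.
rewrite -exprM exp_eq exprS exprM -[X in _ - X]mulr1 -mulrBr.
have := vgeM (in_OK_unit _ vc) (vge_expn_sub1 (m + 2) (in_OKX m (in_OK_unit _ vc)) cm).
by rewrite add0r.
Qed.

Lemma iter_sigma_cong {x : K} k : G 0 sigma -> in_OK v x -> vge (iter k sigma x - x) 1.
Proof.
move=> sigma_G0 Ox; elim: k => [|k IHk]; first by rewrite subrr; left.
have -> : iter k.+1 sigma x - x =
    (sigma (iter k sigma x) - iter k sigma x) + (iter k sigma x - x) by rewrite /=; ring.
by apply: vgeD => //; apply: sigma_G0; apply: in_OK_iter_sigma.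
Qed.

(* The norm of [u] is fixed by [sigma] and congruent to [u^4]; its fourth root in
   the finite residue field is a power of it, hence fixed, and [x |-> x^4] is
   injective on a residue field of characteristic 2. *)
Lemma unit_cong_fixed {u : K} : G 0 sigma -> v u = 0 ->
  exists2 w, sigma w = w & vge (u - w) 1.
Proof.
move=> sigma_G0 vu; have [->|u0] := eqVneq u 0.
  by exists 0; [rewrite rmorph0 | rewrite subr0; left].
have Ou := in_OK_unit _ vu.
have Oiter k : in_OK v (iter k sigma u) := in_OK_iter_sigma k Ou.
have cong k := iter_sigma_cong k sigma_G0 Ou.
pose N := u * iter 1 sigma u * iter 2 sigma u * iter 3 sigma u.
have N0 : N != 0 by rewrite !mulf_neq0 // ?fmorph_eq0.
have vN : v N = 0 by rewrite !valM ?mulf_neq0 ?fmorph_eq0 //= !val_sigmaE vu.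
have sigmaN : sigma N = N by rewrite /N !rmorphM /= sigma4; ring.
have N_u4 : vge (N - u ^+ 2 ^+ 2) 1.
  have -> : u ^+ 2 ^+ 2 = u * u * u * u by ring.
  apply: (vge_cong_mul _ (Oiter 3) _ (cong 3)); first by repeat apply: in_OKM.
  apply: (vge_cong_mul _ (Oiter 2) _ (cong 2)); first exact: in_OKM.
  by apply: (vge_cong_mul Ou (Oiter 1) _ (cong 1)); rewrite subrr; left.
have [n wN] := unit_fourth_root N0 vN.
have Ow : in_OK v (N ^+ n) by apply/in_OKX/in_OK_unit.
exists (N ^+ n); first by rewrite rmorphXn sigmaN.
rewrite -opprB; apply/vgeN; apply: (vge_sqr_sub Ow Ou).
apply: (vge_sqr_sub (in_OKX 2 Ow) (in_OKX 2 Ou)).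
by have := vgeD wN N_u4; rewrite addrA subrK -!exprM; apply.
Qed.

Section RamificationStep.
Variables (g : {rmorphism K -> K}) (pi : K).
Hypotheses (sigma_G0 : G 0 sigma) (val_g : forall x, v (g x) = v x).
Hypotheses (g_fix : forall x, sigma x = x -> g x = x) (pi0 : pi != 0) (vpi : v pi = 1).

Lemma lower_ram_group_succ {j} : G j g -> vge (g pi - pi) j.+2%:Z -> G j.+1 g.
Proof.
move=> g_Gj g_pi.
pose P x := vge (g x - x) (v x + j.+1%:Z).
have PM (x y : K) : x != 0 -> y != 0 -> P x -> P y -> P (x * y).
  move=> x0 y0 Px Py; rewrite /P valM //.
  have -> : g (x * y) - x * y = (g x - x) * g y + x * (g y - y) by rewrite rmorphM; ring.
  apply: vgeD; [have := vgeM Px (vge_val (g y)) | have := vgeM (vge_val x) Py];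
    rewrite ?val_g => /vgeW; apply; lia.
have Ppi k : P (pi ^+ k).
  elim: k => [|k IHk]; first by rewrite /P expr0 rmorph1 subrr; left.
  rewrite exprS; apply: PM; rewrite ?expf_neq0 // /P vpi.
  by apply: vgeW g_pi _; lia.
have P_pos (x : K) : x != 0 -> 0 < v x -> vge (g x - x) j.+2%:Z.
  move=> x0 vx_gt0; have [n vxn] : exists n : nat, v x = n%:Z by exists `|v x|%N; lia.
  have pin0 : pi ^+ n != 0 by rewrite expf_neq0.
  have u0 : x / pi ^+ n != 0 by rewrite mulf_neq0 ?invr_eq0.
  have vu : v (x / pi ^+ n) = 0 by rewrite valf_div // vxn valXn // vpi mulr1 subrr.
  have Pu : P (x / pi ^+ n) by rewrite /P vu add0r; apply/g_Gj/in_OK_unit.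
  by have := PM _ _ u0 pin0 Pu (Ppi n); rewrite divfK // /P => /vgeW; apply; lia.
move=> x [->|]; first by rewrite rmorph0 subr0; left.
have [->|x0] := eqVneq x 0; first by rewrite rmorph0 subr0; left.
rewrite le_eqVlt => /orP[/eqP/esym vx0|]; last exact: P_pos.
have [w sw xw] := unit_cong_fixed sigma_G0 vx0.
have -> : g x - x = g (x - w) - (x - w) by rewrite rmorphB (g_fix w sw); ring.
have [->|xw0] := eqVneq (x - w) 0; first by rewrite rmorph0 subr0; left.
by apply: P_pos => //; case: xw => [/eqP|]; [rewrite (negbTE xw0) | lia].
Qed.

Lemma val_uniformizer_break {j} : G j g -> ~ G j.+1 g ->
  g pi - pi != 0 /\ v (g pi - pi) = j.+1%:Z.
Proof.
move=> g_Gj g_nGj1.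
have pi_moved : ~ vge (g pi - pi) j.+2%:Z by move/(lower_ram_group_succ g_Gj).
have [d0|d0] := eqVneq (g pi - pi) 0; first by case: pi_moved; left.
split=> //; case: (g_Gj pi) => [|/eqP|le_d]; first by right; rewrite vpi.
  by rewrite (negbTE d0).
by apply/eqP; rewrite eq_le le_d andbT; apply: contra_notT pi_moved; rewrite -ltNge; right.
Qed.

End RamificationStep.

Lemma ram_breaks_uniformizer e (pi : K) : (0 < e)%N -> pi != 0 -> v pi = 1 ->
  is_lower_break v sigma e -> is_lower_break v sigma (3 * e) ->
  [/\ G e (iter 1 sigma), sigma pi - pi != 0, v (sigma pi - pi) = e.+1%:Z,
      sigma (sigma pi) - pi != 0 & v (sigma (sigma pi) - pi) = (3 * e).+1%:Z].
Proof.
move=> e_gt0 pi0 vpi break1 break3.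
have [G1 nG1 G2 nG2] := lower_breaks_sigma e_gt0 break1 break3.
have sigma_G0 : G 0 sigma := lower_ram_group_le _ _ _ (leq0n e) G1.
have [d0 vd] :=
  val_uniformizer_break sigma pi sigma_G0 val_sigmaE (fun _ => id) pi0 vpi G1 nG1.
have val_tau x : v ((sigma \o sigma)%FUN x) = v x by rewrite /= !val_sigmaE.
have tau_fix x : sigma x = x -> (sigma \o sigma)%FUN x = x by move=> /= sx; rewrite !sx.
by have [] :=
  val_uniformizer_break (sigma \o sigma)%FUN pi sigma_G0 val_tau tau_fix pi0 vpi G2 nG2.
Qed.

Section Uniformizer.
Variables (e : nat) (pi : K).
Hypothesis e_gt0 : (0 < e)%N.
Hypotheses (pi0 : pi != 0) (vpi : v pi = 1) (sigma_Ge : G e (iter 1 sigma)).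
Hypotheses (d0 : sigma pi - pi != 0) (vd : v (sigma pi - pi) = e.+1%:Z).

Let t := (sigma pi - pi) / pi.

Let t0 : t != 0. Proof. by rewrite mulf_neq0 ?invr_eq0. Qed.
Let vt : v t = e%:Z. Proof. by rewrite valf_div // vd vpi; lia. Qed.

Let sigma_linear (x : K) (n : nat) := vge (sigma x - x - n%:R * t * x) (v x + e%:Z + 1).

Let sigma_linearM (x y : K) m n : x != 0 -> y != 0 ->
  sigma_linear x m -> sigma_linear y n -> sigma_linear (x * y) (m + n).
Proof.
move=> x0 y0; rewrite /sigma_linear rmorphM valM // natrD.
set A := sigma x - x - _; set B := sigma y - y - _ => Ax By.
have -> : sigma x * sigma y - x * y - (m%:R + n%:R) * t * (x * y) =
  x * B + A * y + m%:R * n%:R * t * t * x * y + m%:R * t * x * B + A * n%:R * t * y + A * B.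
  by rewrite /A /B; ring.
have Om := in_OKn m; have On := in_OKn n; have vge_t := vge_val t; rewrite vt in vge_t.
repeat apply: vgeD.
- by apply: vgeW (vgeM (vge_val x) By) _; lia.
- by apply: vgeW (vgeM Ax (vge_val y)) _; lia.
- apply: vgeW (vgeM (vgeM (vgeM (vgeM (vgeM Om On) vge_t) vge_t) (vge_val x)) (vge_val y)) _.
  by lia.
- by apply: vgeW (vgeM (vgeM (vgeM Om vge_t) (vge_val x)) By) _; lia.
- by apply: vgeW (vgeM (vgeM (vgeM Ax On) vge_t) (vge_val y)) _; lia.
- by apply: vgeW (vgeM Ax By) _; lia.
Qed.

Lemma sigma_sub_linear (x : K) n : x != 0 -> v x = n%:Z ->
  vge (sigma x - x - n%:R * t * x) (v x + e%:Z + 1).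
Proof.
move=> x0 vxn.
have pin0 : pi ^+ n != 0 by rewrite expf_neq0.
have u0 : x / pi ^+ n != 0 by rewrite mulf_neq0 ?invr_eq0.
have vu : v (x / pi ^+ n) = 0 by rewrite valf_div // vxn valXn // vpi mulr1 subrr.
have lin_u : sigma_linear (x / pi ^+ n) 0.
  rewrite /sigma_linear mul0r mul0r subr0 vu add0r.
  by apply: vgeW (sigma_Ge _ (in_OK_unit _ vu)) _; lia.
have lin_pi k : sigma_linear (pi ^+ k) k.
  elim: k => [|k IHk].
    by rewrite /sigma_linear expr0 rmorph1 subrr mul0r mul0r subrr; left.
  rewrite exprS -addn1 addnC; apply: sigma_linearM; rewrite ?expf_neq0 //.
  by rewrite /sigma_linear /t mul1r divfK // subrr; left.
by have := sigma_linearM _ _ _ _ u0 pin0 lin_u (lin_pi n); rewrite add0n divfK.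
Qed.

Lemma val_sigma_sub_odd {x : K} {n} : x != 0 -> v x = n%:Z -> odd n ->
  sigma x - x != 0 /\ v (sigma x - x) = v x + e%:Z.
Proof.
move=> x0 vxn n_odd; have [n0 vn] := val_odd_nat n n_odd.
have nt0 : n%:R * t != 0 by rewrite mulf_neq0.
have ntx0 : n%:R * t * x != 0 by rewrite mulf_neq0.
have vntx : v (n%:R * t * x) = v x + e%:Z by rewrite valM // valM // vn vt; ring.
have -> : sigma x - x = n%:R * t * x + (sigma x - x - n%:R * t * x) by ring.
by rewrite -vntx; apply: valDl; rewrite ?vntx //; apply: sigma_sub_linear.
Qed.

Section Construction.
Hypotheses (e_odd : odd e) (val2E : v 2 = (4 * e)%:Z) (two0 : (2 : K) != 0).
Hypotheses (tau_d0 : sigma (sigma pi) - pi != 0)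
  (tau_vd : v (sigma (sigma pi) - pi) = (3 * e).+1%:Z).

Let tau_pi := sigma (sigma pi).
Let z := (pi - tau_pi) / (pi + tau_pi).
Let y := sigma z / z.

Let tau_z : sigma (sigma z) = - z.
Proof.
rewrite !fmorph_div !rmorphB !rmorphD /tau_pi sigma4.
by rewrite [sigma (sigma pi) + pi]addrC -mulNr opprB.
Qed.

Let val_z_sub1 : z - 1 != 0 /\ v (z - 1) = e%:Z.
Proof.
have tau_pi0 : tau_pi != 0 by rewrite !fmorph_eq0.
have v_tau_pi : v tau_pi = 1 by rewrite /tau_pi !val_sigmaE.
have [s0 vs] : pi + tau_pi != 0 /\ v (pi + tau_pi) = (3 * e).+1%:Z.
  have -> : pi + tau_pi = sigma (sigma pi) - pi + 2 * pi by rewrite /tau_pi; ring.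
  rewrite -tau_vd.
  by apply: valDl => //; right; rewrite valM // val2E vpi tau_vd; lia.
have -> : z - 1 = - (2 * tau_pi) / (pi + tau_pi) by rewrite /z; field.
have two_tau0 : - (2 * tau_pi) != 0 by rewrite oppr_eq0 mulf_neq0.
by rewrite mulf_neq0 ?invr_eq0 // valf_div // valN valM // val2E v_tau_pi vs; split=> //; ring.
Qed.

Let val_z : z != 0 /\ v z = 0.
Proof.
have [z10 vz1] := val_z_sub1.
have -> : z = 1 + (z - 1) by ring.
by rewrite -val1; apply: valDl; [exact: oner_neq0 | right; rewrite val1 vz1; lia].
Qed.

Let sigma_y : sigma y = - y^-1.
Proof. by rewrite /y fmorph_div tau_z invf_div mulNr. Qed.

Let tau_y : sigma (sigma y) = y.
Proof. by rewrite sigma_y rmorphN fmorphV sigma_y invrN invrK opprK. Qed.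

Let val_y_sub1 : y - 1 != 0 /\ v (y - 1) = (2 * e)%:Z.
Proof.
have [z0 vz] := val_z; have [z10 vz1] := val_z_sub1.
have [dz0 vdz] := val_sigma_sub_odd z10 vz1 e_odd.
have -> : y - 1 = (sigma (z - 1) - (z - 1)) / z by rewrite /y rmorphB rmorph1; field.
by rewrite mulf_neq0 ?invr_eq0 // valf_div // vdz vz1 vz; split=> //; ring.
Qed.

Let val_y : y != 0 /\ v y = 0.
Proof.
have [y10 vy1] := val_y_sub1.
have -> : y = 1 + (y - 1) by ring.
by rewrite -val1; apply: valDl; [exact: oner_neq0 | right; rewrite val1 vy1; lia].
Qed.

Let val_y_add1 : y + 1 != 0 /\ v (y + 1) = (2 * e)%:Z.
Proof.
have [y10 vy1] := val_y_sub1.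
have -> : y + 1 = y - 1 + 2 by ring.
by rewrite -vy1; apply: valDl => //; right; rewrite vy1 val2E; lia.
Qed.

Variable lam : K.
Hypotheses (lam0 : lam != 0) (sigma_lam : sigma lam = lam) (vlam : v lam = 4).

Let lamX (n : int) :
  [/\ lam ^ n != 0, sigma (lam ^ n) = lam ^ n & v (lam ^ n) = n * 4].
Proof.
by split; [rewrite expfz_neq0 | rewrite fmorphXz sigma_lam | rewrite valXz // vlam].
Qed.

Lemma mu1_construction (a : int) : (a = e%:Z %[mod 4])%Z ->
  exists alpha rho : K,
    [/\ alpha != 0 /\ v alpha = a, rho != 0 /\ v rho = a + (2 * e)%:Z &
        let mu1 := sigma alpha - alpha - rho in
        [/\ sigma (sigma mu1) = mu1, mu1 != 0 & v mu1 = a + e%:Z]].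
Proof.
move=> /eqz_mod_exists [n ->].
have [k0 sk vk] := lamX n; set k := lam ^ n in k0 sk vk.
have [z0 _] := val_z; have [z10 vz1] := val_z_sub1; have [y10 vy1] := val_y_sub1.
have sz : sigma z = y * z by rewrite /y divfK.
have ty := tau_y; clearbody y z.
exists (k * (z - 1)), (k * (y - 1) * (z - 1)); split.
- by rewrite mulf_neq0 // valM // vk vz1; split=> //; ring.
- by rewrite !mulf_neq0 // !valM ?mulf_neq0 // vk vz1 vy1; split=> //; ring.
have -> : sigma (k * (z - 1)) - k * (z - 1) - k * (y - 1) * (z - 1) = k * (y - 1).
  by rewrite rmorphM rmorphB rmorph1 sk sz; ring.
split; first by rewrite !rmorphM !rmorphB !rmorph1 !sk ty.
  by rewrite mulf_neq0.
by rewrite valM // vk vy1; ring.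
Qed.

Lemma mu0_construction (a : int) : (a = (3 * e)%:Z %[mod 4])%Z ->
  exists alpha rho : K,
    [/\ alpha != 0 /\ v alpha = a, rho != 0 /\ v rho = a + (2 * e)%:Z &
        let mu0 := sigma alpha + alpha - rho in
        [/\ sigma mu0 = mu0, mu0 != 0 & v mu0 = a + e%:Z]].
Proof.
move=> /eqz_mod_exists [n ->].
have [k0 sk vk] := lamX (n + e%:Z); set k := lam ^ _ in k0 sk vk.
have [z0 vz] := val_z; have [z10 vz1] := val_z_sub1; have [y0 vy] := val_y.
have [y10 vy1] := val_y_sub1; have [yp0 vyp] := val_y_add1.
have sz : sigma z = y * z by rewrite /y divfK.
have sy := sigma_y; clearbody y z.
have kyz0 : - (k * y * (z - 1)) != 0 by rewrite oppr_eq0 !mulf_neq0.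
have kyz20 : 2 * k * y * (z - 1) != 0 by rewrite !mulf_neq0.
have yy0 : (y - 1) * (y + 1) != 0 by rewrite mulf_neq0.
exists (- (k * y * (z - 1)) / (y + 1)), (2 * k * y * (z - 1) / ((y - 1) * (y + 1))); split.
- rewrite mulf_neq0 ?invr_eq0 // valf_div // valN !valM ?mulf_neq0 //.
  by rewrite vk vy vz1 vyp; split=> //; ring.
- rewrite mulf_neq0 ?invr_eq0 // valf_div // !valM ?mulf_neq0 //.
  by rewrite val2E vk vy vz1 vy1 vyp; split=> //; ring.
have -> : sigma (- (k * y * (z - 1)) / (y + 1)) + - (k * y * (z - 1)) / (y + 1)
    - 2 * k * y * (z - 1) / ((y - 1) * (y + 1)) = k.
  rewrite fmorph_div rmorphN !rmorphM rmorphB rmorphD rmorph1 sk sz sy.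
  by field; rewrite yp0 y10 y0.
by split=> //; rewrite vk; ring.
Qed.

End Construction.
End Uniformizer.
End ResidueField.
End Automorphism.
End Valuation.

Theorem lemma3p7 (K2 : fieldType) (v2 : K2 -> int)
  (sigma : {rmorphism K2 -> K2}) (e0 : nat)
  (hK2 : finite_ext_Q2 v2)
  (hsig4 : forall x, sigma (sigma (sigma (sigma x))) = x)
  (hsig2 : exists x, sigma (sigma x) != x)
  (hsigv : forall x, x != 0 -> v2 (sigma x) = v2 x)
  (htot : (forall x, x != 0 -> sigma x = x -> (4 %| v2 x)%Z) /\
          (exists x, [/\ x != 0, sigma x = x & v2 x = 4]))
  (he0 : v2 2 = (4 * e0)%:Z) (he0odd : odd e0)
  (hbreaks : forall j : nat, is_lower_break v2 sigma j <-> (j = e0 \/ j = e0 + 2 * e0)%N) :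
  forall a : int, ~~ (2 %| a)%Z ->
  exists alpha rho : K2,
    [/\ alpha != 0 /\ v2 alpha = a,
        rho != 0 /\ v2 rho = a + (2 * e0)%:Z,
        (a = e0%:Z %[mod 4])%Z ->
          let mu1 := sigma alpha - alpha - rho in
          [/\ sigma (sigma mu1) = mu1, mu1 != 0 & v2 mu1 = a + e0%:Z]
      & (a = (3 * e0)%:Z %[mod 4])%Z ->
          let mu0 := sigma alpha + alpha - rho in
          [/\ sigma mu0 = mu0, mu0 != 0 & v2 mu0 = a + e0%:Z]].
Proof.
move=> a a_odd.
case: hK2 => [[valM val_min [pi [pi0 vpi]]] _ finite_res pchar0 val2_gt0].
have e0_gt0 := odd_gt0 he0odd.
have two0 : (2 : K2) != 0 by have := pchar0 2; rewrite !inE /= => /negbT.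
have [break1 break3] : is_lower_break v2 sigma e0 /\ is_lower_break v2 sigma (3 * e0).
  by split; apply/hbreaks; [left | right; lia].
have [S_e0 d0 vd tau_d0 tau_vd] :=
  ram_breaks_uniformizer _ _ valM val_min _ hsig4 hsigv val2_gt0 finite_res _ _
    e0_gt0 pi0 vpi break1 break3.
have [_ [lam [lam0 sigma_lam vlam]]] := htot.
have [a_e|a_3e] := odd_mod4_cases a_odd he0odd.
- have [alpha [rho [alphaP rhoP mu1P]]] :=
    mu1_construction _ _ valM val_min _ hsig4 hsigv val2_gt0 _ _
    e0_gt0 pi0 vpi S_e0 d0 vd he0odd he0 two0 tau_d0 tau_vd _ lam0 sigma_lam vlam _ a_e.
  by exists alpha, rho; split=> // a_3e; case: (odd_mod4_exclusive he0odd a_e a_3e).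
- have [alpha [rho [alphaP rhoP mu0P]]] :=
    mu0_construction _ _ valM val_min _ hsig4 hsigv val2_gt0 _ _
    e0_gt0 pi0 vpi S_e0 d0 vd he0odd he0 two0 tau_d0 tau_vd _ lam0 sigma_lam vlam _ a_3e.
  by exists alpha, rho; split=> // a_e; case: (odd_mod4_exclusive he0odd a_e a_3e).
Qed.
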